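(* In the N-CIRL game described in the context, the primal value backup operator $G$, acting on bounded functions $v:\mathcal{S}\times\Delta(\Theta)\to\mathbb{R}$ by $$[Gv](s,b)=\max_{\bar\pi^A}\min_{\bar\pi^D}\Big\{\sum_{a,d,s',\vartheta}b(\vartheta)\bar\pi^A(a\mid s,\vartheta)\bar\pi^D(d\mid s)\mathcal{T}(s'\mid s,a,d)\big(R(s,a,d,s';\vartheta)+\gamma\,v(s',\tau(s,b,a))\big)\Big\},$$ with $\tau_\vartheta(s,b,a)=\bar\pi^A(a\mid s,\vartheta)b(\vartheta)/\sum_{\vartheta'}\bar\pi^A(a\mid s,\vartheta')b(\vartheta')$, is a contraction mapping with respect to the supremum norm. Consequently, iterating $G$ from any bounded initial function converges to the value function of the N-CIRL game, which is the fixed point of $v=Gv$.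
   Context: N-CIRL game: finite state set $\mathcal{S}$, finite attacker action set $\mathcal{A}$, finite defender action set $\mathcal{D}$, transition kernel $\mathcal{T}(s'\mid s,a,d)$, finite intent parameter set $\Theta$, bounded reward $R(s,a,d,s';\theta)$ to the attacker (the defender receives $-R$), discount factor $\gamma\in[0,1)$. The intent $\theta$ is known only to the attacker; states and both players' past actions are publicly observed. The value function is $v(s,b)=\max_{\sigma^A}\min_{\sigma^D}\mathbb{E}[\sum_{t\ge0}\gamma^tR(s_t,a_t,d_t,s_{t+1};\theta)\mid s_0=s,\theta\sim b]$ over behavioral strategies. The max in $G$ is over one-stage attacker strategies $\bar\pi^A:\mathcal{S}\times\Theta\to\Delta(\mathcal{A})$ and the min over one-stage defender strategies $\bar\pi^D:\mathcal{S}\to\Delta(\mathcal{D})$; $\Delta(X)$ is the set of probability distributions on $X$. *)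

From HB Require Import structures.
From mathcomp Require Import all_boot all_order all_algebra.
From mathcomp Require Import all_classical all_reals all_analysis.
Set Implicit Arguments. Unset Strict Implicit. Unset Printing Implicit Defensive.
Import Order.TTheory GRing.Theory Num.Theory.
Local Open Scope classical_set_scope.
Local Open Scope ring_scope.

Section NCIRL.
Variables (R : realType) (S A D Th : finType).
(* Tr s a d s' = T(s' | s, a, d);  Rw s a d s' th = R(s,a,d,s';th) *)
Variables (Tr : S -> A -> D -> S -> R) (Rw : S -> A -> D -> S -> Th -> R) (gamma : R).

Definition isdist (X : finType) (p : X -> R) : Prop :=
  (forall x, 0 <= p x) /\ \sum_(x : X) p x = 1.

(* value functions on S x Delta(Theta) (beliefs represented as functions Th -> R) *)
Definition vfun := S -> (Th -> R) -> R.

Definition bounded (v : vfun) : Prop :=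
  exists M : R, forall s b, isdist b -> `|v s b| <= M.

Definition supdist (v w : vfun) : R :=
  sup [set `|v s b - w s b| | s in [set: S] & b in [set b | isdist b]].

Definition stratA (pA : S -> Th -> A -> R) : Prop := forall s t, isdist (pA s t).
Definition stratD (pD : S -> D -> R) : Prop := forall s, isdist (pD s).

(* Bayesian belief update tau(s,b,a) under pA(.|s,.); when the denominator
   vanishes (a has probability 0) the belief is left unchanged (irrelevant,
   as the corresponding term carries weight 0). *)
Definition tau (pAs : Th -> A -> R) (b : Th -> R) (a : A) : Th -> R :=
  let den := \sum_(t' : Th) pAs t' a * b t' in
  if den == 0 then b else fun t => pAs t a * b t / den.

Definition stage (v : vfun) (s : S) (b : Th -> R)
  (pA : S -> Th -> A -> R) (pD : S -> D -> R) : R :=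
  \sum_(a : A) \sum_(d : D) \sum_(s' : S) \sum_(t : Th)
    b t * pA s t a * pD s d * Tr s a d s' *
    (Rw s a d s' t + gamma * v s' (tau (pA s) b a)).

(* primal value backup operator G (max/min rendered as sup/inf) *)
Definition G (v : vfun) : vfun := fun s b =>
  sup [set x | exists pA, stratA pA /\
     x = inf [set y | exists pD, stratD pD /\ y = stage v s b pA pD]].

(* public histories: past (state, attacker action, defender action) triples *)
Definition hist := seq (S * A * D).

(* behavioral strategies: attacker sees theta, the history and current state;
   defender sees the history and current state *)
Definition behavA (sA : Th -> hist -> S -> A -> R) : Prop :=
  forall t h s, isdist (sA t h s).
Definition behavD (sD : hist -> S -> D -> R) : Prop :=
  forall h s, isdist (sD h s).

Fixpoint Jfin (n : nat) (sA : Th -> hist -> S -> A -> R) (sD : hist -> S -> D -> R)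
  (h : hist) (s : S) (t : Th) {struct n} : R :=
  match n with
  | O => 0
  | n'.+1 => \sum_(a : A) \sum_(d : D) \sum_(s' : S)
      sA t h s a * sD h s d * Tr s a d s' *
      (Rw s a d s' t + gamma * Jfin n' sA sD (rcons h (s, a, d)) s' t)
  end.

(* E[ sum_{t>=0} gamma^t R_t | s_0 = s, theta ~ b ] as the limit of the
   finite-horizon expectations *)
Definition payoff sA sD (s : S) (b : Th -> R) : R :=
  limn (fun n => \sum_(t : Th) b t * Jfin n sA sD [::] s t).

Definition Vgame : vfun := fun s b =>
  sup [set x | exists sA, behavA sA /\
     x = inf [set y | exists sD, behavD sD /\ y = payoff sA sD s b]].

End NCIRL.

(* G is a gamma-contraction because the reward part of a stage payoff does not
   depend on v, while its continuation part is an average of values of v at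
   posterior beliefs, so it moves by at most gamma * sup |v - w|.
   To identify the fixed point with the game value, let V_n be the value of the
   n-stage truncated game.  Factoring the joint law of (theta, a) as the marginal
   of a times the posterior of theta gives V_(n+1) = G V_n: a behavioural strategy
   is a first-stage strategy together with continuations indexed by the first
   public outcome, and epsilon-optimal continuations can be glued to any
   first-stage strategy.  Infinite-horizon payoffs, hence values, are within
   gamma^n * 2 rmax / (1 - gamma) of their n-stage truncations, so
   |G V - V| <= |G V - G V_n| + |V_(n+1) - V| vanishes; the iterates of G then
   converge to V geometrically. *)

From Pilot Require Import Defs.
From HB Require Import structures.
From mathcomp Require Import all_boot all_order all_algebra.
From mathcomp Require Import all_classical all_reals all_analysis.
From mathcomp Require Import ring lra.
Import Order.TTheory GRing.Theory Num.Theory numFieldNormedType.Exports.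
Local Open Scope classical_set_scope.
Local Open Scope ring_scope.
Set Implicit Arguments. Unset Strict Implicit. Unset Printing Implicit Defensive.

Section SupInf.
Variable R : realType.

Lemma sup_norm_le (E : set R) K : 0 <= K -> (forall x, E x -> `|x| <= K) -> `|sup E| <= K.
Proof.
move=> K0 HE; have [[x Ex]|nE] := pselect (exists x, E x); last first.
  have -> : E = set0 by apply/seteqP; split=> y // Ey; exfalso; apply: nE; exists y.
  by rewrite sup0 normr0.
have ubE : has_ubound E by exists K => y /HE /ler_normlP [].
rewrite ler_norml; apply/andP; split; last first.
  by apply: ge_sup; [exists x | move=> y /HE /ler_normlP []].
apply: le_trans (ub_le_sup ubE Ex).
by have /ler_normlP [] := HE _ Ex; rewrite lerNl.
Qed.

Lemma inf_norm_le (E : set R) K : 0 <= K -> (forall x, E x -> `|x| <= K) -> `|inf E| <= K.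
Proof.
move=> K0 HE; rewrite /inf normrN; apply: sup_norm_le => // y [x Ex <-].
by rewrite normrN; apply: HE.
Qed.

Definition supinf (X Y : Type) (P : X -> Prop) (Q : Y -> Prop) (f : X -> Y -> R) :=
  sup [set z | exists x, P x /\ z = inf [set w | exists y, Q y /\ w = f x y]].

Variables (X Y : Type) (P : X -> Prop) (Q : Y -> Prop).

Definition bounded_on (f : X -> Y -> R) K := forall x y, P x -> Q y -> `|f x y| <= K.

Lemma supinf_norm_le f K : 0 <= K -> bounded_on f K -> `|supinf P Q f| <= K.
Proof.
move=> K0 Hf; apply: sup_norm_le => // z [x [Px ->]].
by apply: inf_norm_le => // w [y [Qy ->]]; apply: Hf.
Qed.

Lemma supinf_set0 f : (~ exists x, P x) \/ (~ exists y, Q y) -> supinf P Q f = 0.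
Proof.
rewrite /supinf => -[nP|nQ].
  rewrite (_ : [set z | _] = set0) ?sup0 //.
  by apply/seteqP; split=> z // [x [Px _]]; apply: nP; exists x.
apply/eqP; rewrite -normr_le0; apply: sup_norm_le => // z [x [_ ->]].
rewrite (_ : [set w | _] = set0) ?inf0 ?normr0 //.
by apply/seteqP; split=> w // [y [Qy _]]; apply: nQ; exists y.
Qed.

Lemma inf_section_le f K x : P x -> bounded_on f K ->
  inf [set w | exists y, Q y /\ w = f x y] <= supinf P Q f.
Proof.
move=> Px Hf; apply: ub_le_sup; last by exists x.
exists `|K| => z [x' [Px' ->]]; apply: le_trans (ler_norm _) _.
apply: inf_norm_le => // w [y [Qy ->]]; apply: le_trans (Hf _ _ Px' Qy) (ler_norm _).
Qed.

Lemma inf_section_lb f K x y : P x -> Q y -> bounded_on f K ->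
  inf [set w | exists y, Q y /\ w = f x y] <= f x y.
Proof.
move=> Px Qy Hf; apply: ge_inf; last by exists y.
by exists (- K) => w [y' [Qy' ->]]; have /ler_normlP [] := Hf _ _ Px Qy'; rewrite lerNl.
Qed.

Lemma supinf_inner_approx f K x e : bounded_on f K -> P x -> (exists y, Q y) -> 0 < e ->
  exists2 y, Q y & f x y <= supinf P Q f + e.
Proof.
move=> Hf Px [y0 Qy0] e0.
have hE : has_inf [set w | exists y, Q y /\ w = f x y].
  split; first by exists (f x y0), y0.
  by exists (- K) => w [y [Qy ->]]; have /ler_normlP [] := Hf _ _ Px Qy; rewrite lerNl.
have [_ [y [Qy ->]] lt_e] := inf_adherent e0 hE.
by exists y => //; apply: le_trans (ltW lt_e) _; rewrite lerD2r (inf_section_le Px Hf).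
Qed.

Lemma supinf_outer_approx f K e : bounded_on f K -> (exists x, P x) -> 0 < e ->
  exists2 x, P x & forall y, Q y -> supinf P Q f <= f x y + e.
Proof.
move=> Hf [x0 Px0] e0.
have hF : has_sup [set z | exists x, P x /\ z = inf [set w | exists y, Q y /\ w = f x y]].
  split; first by exists (inf [set w | exists y, Q y /\ w = f x0 y]), x0.
  by exists (supinf P Q f) => z [x [Px ->]]; exact: inf_section_le Hf.
have [_ [x [Px ->]] lt_e] := sup_adherent e0 hF.
exists x => // y Qy; rewrite -lerBlDr; apply: le_trans (ltW lt_e) _.
exact: inf_section_lb Hf.
Qed.

End SupInf.

Lemma supinf_le (R : realType) X Y X' Y' (P : X -> Prop) (Q : Y -> Prop)
    (P' : X' -> Prop) (Q' : Y' -> Prop) (f : X -> Y -> R) g K e :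
  bounded_on P Q f K -> bounded_on P' Q' g K -> (exists x, P x) -> (exists y, Q' y) ->
  (forall x, P x -> exists2 x', P' x' &
     forall y', Q' y' -> exists2 y, Q y & f x y <= g x' y' + e) ->
  supinf P Q f <= supinf P' Q' g + e.
Proof.
move=> Hf Hg [x0 Px0] [y0 Qy0] H.
apply: ge_sup; first by exists (inf [set w | exists y, Q y /\ w = f x0 y]), x0.
move=> z [x [Px ->]]; have [x' Px' Hx'] := H x Px; rewrite -lerBlDr.
apply: le_trans (inf_section_le Px' Hg); apply: lb_le_inf; first by exists (g x' y0), y0.
move=> w [y' [Qy' ->]]; rewrite lerBlDr; have [y Qy le_fg] := Hx' y' Qy'.
exact: le_trans (inf_section_lb Px Qy Hf) le_fg.
Qed.

Lemma supinf_norm_sub_le (R : realType) X Y (P : X -> Prop) (Q : Y -> Prop)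
    (f g : X -> Y -> R) K e :
  0 <= e -> bounded_on P Q f K -> (forall x y, P x -> Q y -> `|f x y - g x y| <= e) ->
  `|supinf P Q f - supinf P Q g| <= e.
Proof.
move=> e0 Hf Hfg.
have [[x0 Px0]|nP] := pselect (exists x, P x); last first.
  by rewrite !supinf_set0 ?subrr ?normr0 //; left.
have [[y0 Qy0]|nQ] := pselect (exists y, Q y); last first.
  by rewrite !supinf_set0 ?subrr ?normr0 //; right.
have Hf' : bounded_on P Q f (K + e).
  by move=> x y Px Qy; apply: le_trans (Hf _ _ Px Qy) _; rewrite lerDl.
have Hg : bounded_on P Q g (K + e).
  move=> x y Px Qy; rewrite -[g x y](subKr (f x y)).
  by apply: le_trans (ler_normB _ _) _; apply: lerD; [exact: Hf | exact: Hfg].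
rewrite ler_norml; apply/andP; split.
  rewrite lerNl opprB lerBlDr addrC; apply: supinf_le Hg Hf' _ _ _; [by exists x0 | by exists y0 |].
  move=> x Px; exists x => // y Qy; exists y => //.
  by have /ler_normlP [] := Hfg _ _ Px Qy; lra.
rewrite lerBlDr addrC; apply: supinf_le Hf' Hg _ _ _; [by exists x0 | by exists y0 |].
move=> x Px; exists x => // y Qy; exists y => //.
by have /ler_normlP [] := Hfg _ _ Px Qy; lra.
Qed.

Section Averages.
Variable R : realType.

Lemma avg_le (I : finType) (p F : I -> R) B : isdist p -> (forall i, F i <= B) ->
  \sum_i p i * F i <= B.
Proof.
move=> [p0 p1] HF; rewrite -[leRHS]mul1r -p1 mulr_suml.
by apply: ler_sum => i _; rewrite ler_wpM2l.
Qed.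

Lemma norm_avg_le (I : finType) (p F : I -> R) B : isdist p -> (forall i, `|F i| <= B) ->
  `|\sum_i p i * F i| <= B.
Proof.
move=> [p0 p1] HF; apply: le_trans (ler_norm_sum _ _ _) _.
rewrite -[leRHS]mul1r -p1 mulr_suml; apply: ler_sum => i _.
by rewrite normrM ger0_norm // ler_wpM2l.
Qed.

Lemma avg_const (I : finType) (p : I -> R) c : isdist p -> \sum_i p i * c = c.
Proof. by case=> _ p1; rewrite -mulr_suml p1 mul1r. Qed.

Lemma sum3_nested (I J K : finType) (p : I -> R) (q : J -> R) (r : I -> J -> K -> R) F :
  \sum_i \sum_j \sum_k p i * q j * r i j k * F i j k =
  \sum_i p i * \sum_j q j * \sum_k r i j k * F i j k.
Proof.
apply: eq_bigr => i _; rewrite mulr_sumr; apply: eq_bigr => j _.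
by rewrite !mulr_sumr; apply: eq_bigr => k _; rewrite !mulrA.
Qed.

Lemma sum3B (I J K : finType) (F F' : I -> J -> K -> R) :
  \sum_i \sum_j \sum_k F i j k - \sum_i \sum_j \sum_k F' i j k =
  \sum_i \sum_j \sum_k (F i j k - F' i j k).
Proof.
by rewrite -sumrB; apply: eq_bigr => i _; rewrite -sumrB; apply: eq_bigr => j _; rewrite -sumrB.
Qed.

Variables (I J K : finType) (p : I -> R) (q : J -> R) (r : I -> J -> K -> R).
Hypotheses (Hp : isdist p) (Hq : isdist q) (Hr : forall i j, isdist (r i j)).

Lemma avg3_le F B : (forall i j k, F i j k <= B) ->
  \sum_i \sum_j \sum_k p i * q j * r i j k * F i j k <= B.
Proof.
by move=> HF; rewrite sum3_nested; do 3![apply: avg_le => // ?].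
Qed.

Lemma norm_avg3_le F B : (forall i j k, `|F i j k| <= B) ->
  `|\sum_i \sum_j \sum_k p i * q j * r i j k * F i j k| <= B.
Proof.
by move=> HF; rewrite sum3_nested; do 3![apply: norm_avg_le => // ?].
Qed.

End Averages.

Section Geometric.
Variables (R : realType) (g : R).
Hypotheses (g0 : 0 <= g) (g1 : g < 1).

Lemma geometric_eventually_le c e : 0 <= c -> 0 < e ->
  exists N, forall n, (N <= n)%N -> g ^+ n * c <= e.
Proof.
move=> c0 e0; have c1 : 0 < c + 1 by lra.
have gl : `|g| < 1 by rewrite ger0_norm.
have /cvgr0_norm_lt/(_ (e / (c + 1)) (divr_gt0 e0 c1)) [N _ HN] := cvg_expr gl.
exists N => n /HN; rewrite /= ger0_norm ?exprn_ge0 // ltr_pdivlMr // ?ger0_norm // => lt_e.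
by apply: le_trans (ltW lt_e); rewrite ler_wpM2l ?exprn_ge0 // lerDl.
Qed.

Lemma geometric_bound_eq0 (x c : R) : (forall n, `|x| <= g ^+ n * c) -> x = 0.
Proof.
move=> Hx; have c0 : 0 <= c by have := Hx 0%N; rewrite expr0 mul1r; exact: le_trans.
apply/eqP; rewrite -normr_le0; apply/ler_addgt0Pr => e e0; rewrite add0r.
by have [N HN] := geometric_eventually_le c0 e0; apply: le_trans (Hx N) (HN N _).
Qed.

Lemma geometric_cauchy_lim (u : nat -> R) c :
  (forall n k, `|u (n + k)%N - u n| <= g ^+ n * c) ->
  forall n : nat, `|limn u - u n| <= g ^+ n * c.
Proof.
move=> Hu; have c0 : 0 <= c by have := Hu 0%N 0%N; rewrite expr0 mul1r; exact: le_trans.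
have cvg_u : cvgn u.
  apply: cauchy_cvg; apply: cauchy_exP => e e0.
  have [N HN] := geometric_eventually_le c0 (divr_gt0 e0 (ltr0n _ 2)).
  exists (u N), N => // m /= le_Nm; rewrite -ball_normE /ball_ /= distrC -(subnKC le_Nm).
  by apply: le_lt_trans (Hu N _) _; apply: le_lt_trans (HN N (leqnn N)) _; lra.
move=> n; have near_u : \forall m \near \oo, `|u m - u n| <= g ^+ n * c :> R.
  by exists n => // m /= le_nm; rewrite -(subnKC le_nm).
rewrite ler_norml; apply/andP; split.
  rewrite lerBrDr; apply: limr_ge => //; apply: filterS near_u => m /ler_normlP []; lra.
rewrite lerBlDl; apply: limr_le => //; apply: filterS near_u => m /ler_normlP []; lra.
Qed.
End Geometric.

Section Belief.
Variables (R : realType) (A Th : finType) (pAs : Th -> A -> R) (b : Th -> R).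
Hypotheses (Hb : isdist b) (HpA : forall t, isdist (pAs t)).

Definition amarg (a : A) : R := \sum_t pAs t a * b t.

Lemma amarg_dist : isdist amarg.
Proof.
case: Hb => b0 b1; split=> [a|].
  by apply: sumr_ge0 => t _; rewrite mulr_ge0 //; case: (HpA t).
rewrite /amarg exchange_big /= -b1; apply: eq_bigr => t _.
by rewrite -mulr_suml (proj2 (HpA t)) mul1r.
Qed.

Lemma tau_dist a : isdist (tau pAs b a).
Proof.
case: Hb => b0 b1; rewrite /tau; case: eqP => [//|amarg_neq0]; split.
  by move=> t; rewrite divr_ge0 ?mulr_ge0 //; [case: (HpA t) | exact: (proj1 amarg_dist)].
by rewrite -mulr_suml divff //; apply/eqP.
Qed.

(* If a has marginal probability 0 then tau is the junk value b, but both sides vanish. *)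
Lemma bayes a t : b t * pAs t a = amarg a * tau pAs b a t.
Proof.
rewrite /tau -/(amarg a); case: eqP => [amarg0|/eqP amarg_neq0]; last first.
  by rewrite mulrC mulrCA divff ?mulr1.
rewrite amarg0 mul0r mulrC; apply/eqP; move/eqP: amarg0.
have pb0 t' : 0 <= pAs t' a * b t' by rewrite mulr_ge0 //; [case: (HpA t') | case: Hb].
by rewrite psumr_eq0 // => /allP/(_ t (mem_index_enum t)).
Qed.

End Belief.

Section SupNorm.
Variables (R : realType) (S Th : finType).

Definition bounded_by (v : vfun R S Th) (K : R) := forall s b, isdist b -> `|v s b| <= K.

Lemma norm_sub_le_supdist (v w : vfun R S Th) Kv Kw s b :
  bounded_by v Kv -> bounded_by w Kw -> isdist b -> `|v s b - w s b| <= supdist v w.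
Proof.
move=> Hv Hw Hb; apply: ub_le_sup; last by exists s => //; exists b.
exists (Kv + Kw) => _ [s' _ [b' Hb' <-]].
by apply: le_trans (ler_normB _ _) _; rewrite lerD ?Hv ?Hw.
Qed.

Lemma supdist_le (v w : vfun R S Th) c :
  0 <= c -> (forall s b, isdist b -> `|v s b - w s b| <= c) -> supdist v w <= c.
Proof.
move=> c0 Hvw; have [[s [b Hb]] | nb] := pselect (exists (s : S) (b : Th -> R), isdist b).
  apply: ge_sup; first by exists `|v s b - w s b|; exists s => //; exists b.
  by move=> _ [s' _ [b' Hb' <-]]; apply: Hvw.
rewrite /supdist (_ : [set _ | _ in _ & _ in _] = set0) ?sup0 //.
by apply/seteqP; split=> z // [s' _ [b' Hb' _]]; apply: nb; exists s', b'.
Qed.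

Lemma supdist_ge0 (v w : vfun R S Th) Kv Kw :
  bounded_by v Kv -> bounded_by w Kw -> 0 <= supdist v w.
Proof.
move=> Hv Hw; have [[s [b Hb]] | nb] := pselect (exists (s : S) (b : Th -> R), isdist b).
  exact: le_trans (normr_ge0 _) (norm_sub_le_supdist s Hv Hw Hb).
rewrite /supdist (_ : [set _ | _ in _ & _ in _] = set0) ?sup0 //.
by apply/seteqP; split=> z // [s' _ [b' Hb' _]]; apply: nb; exists s', b'.
Qed.

End SupNorm.

Section Game.
Variables (R : realType) (S A D Th : finType).
Variables (Tr : S -> A -> D -> S -> R) (Rw : S -> A -> D -> S -> Th -> R) (gamma : R).
Hypothesis HTr : forall s a d, isdist (Tr s a d).
Hypotheses (g0 : 0 <= gamma) (g1 : gamma < 1).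

Local Notation hist := (hist S A D).
Local Notation J := (Jfin Tr Rw gamma).
Local Notation stage := (stage Tr Rw gamma).
Local Notation G := (G Tr Rw gamma).
Local Notation Vgame := (Vgame Tr Rw gamma).
Local Notation payoff := (payoff Tr Rw gamma).
Local Notation stratA := (@Defs.stratA R S A Th).
Local Notation stratD := (@Defs.stratD R S D).
Local Notation behavA := (@Defs.behavA R S A D Th).
Local Notation behavD := (@Defs.behavD R S A D).

Definition shiftA (x : S * A * D) (sA : Th -> hist -> S -> A -> R) :
  Th -> hist -> S -> A -> R := fun t h s => sA t (x :: h) s.

Definition shiftD (x : S * A * D) (sD : hist -> S -> D -> R) : hist -> S -> D -> R :=
  fun h s => sD (x :: h) s.

Definition init_state (h : hist) (s : S) : S := if h is x :: _ then x.1.1 else s.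

Lemma Jfin_cons n x sA sD h s t :
  J n sA sD (x :: h) s t = J n (shiftA x sA) (shiftD x sD) h s t.
Proof.
elim: n h s => [//|n IH] h s /=.
by apply: eq_bigr => a _; apply: eq_bigr => d _; apply: eq_bigr => s' _; rewrite IH.
Qed.

Lemma Jfin_eq_after n sA sA' sD sD' h s t :
  (forall h' s' t', sA t' (h ++ h') s' = sA' t' (h ++ h') s') ->
  (forall h' s', sD (h ++ h') s' = sD' (h ++ h') s') ->
  J n sA sD h s t = J n sA' sD' h s t.
Proof.
elim: n h s => [//|n IH] h s HA HD /=.
apply: eq_bigr => a _; apply: eq_bigr => d _; apply: eq_bigr => s' _.
have := HA [::] s t; have := HD [::] s; rewrite cats0 => -> ->.
rewrite (IH (rcons h (s, a, d))) // => h' *; rewrite -cats1 -catA /=; [exact: HA | exact: HD].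
Qed.

Lemma Jfin_eq_from n sA sA' sD sD' s t :
  (forall h s' t', init_state h s' = s -> sA t' h s' = sA' t' h s') ->
  (forall h s', init_state h s' = s -> sD h s' = sD' h s') ->
  J n sA sD [::] s t = J n sA' sD' [::] s t.
Proof.
case: n => [//|n] HA HD /=.
apply: eq_bigr => a _; apply: eq_bigr => d _; apply: eq_bigr => s' _.
rewrite HA // HD // (@Jfin_eq_after n sA sA' sD sD' [:: (s, a, d)]) // => *;
  [exact: HA | exact: HD].
Qed.

(* On a history (s, a, d) :: h' the state reached after the first stage is
   init_state h' s, so rho sees the whole first public outcome. *)
Definition glue (Z : Type) (z0 : S -> Z) (rho : A * D * S -> hist -> S -> Z) : hist -> S -> Z :=
  fun h s => if h is x :: h' then rho (x.1.2, x.2, init_state h' s) h' s else z0 s.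

Lemma glue_forall (Z : Type) (P : Z -> Prop) z0 rho :
  (forall s, P (z0 s)) -> (forall x h s, P (rho x h s)) -> forall h s, P (glue z0 rho h s).
Proof. by move=> H0 Hrho [|x h] s; [exact: H0 | exact: Hrho]. Qed.

Definition glueA (pA : S -> Th -> A -> R) (sig : A * D * S -> Th -> hist -> S -> A -> R) :
  Th -> hist -> S -> A -> R := fun t => glue (pA^~ t) (fun x => sig x t).

Lemma Jfin_glueD n sA pD rho s a d s' t :
  J n sA (glue pD rho) [:: (s, a, d)] s' t = J n (shiftA (s, a, d) sA) (rho (a, d, s')) [::] s' t.
Proof. by rewrite Jfin_cons; apply: Jfin_eq_from => // h s'' <-. Qed.

Lemma Jfin_glueA n pA sig sD s a d s' t :
  J n (glueA pA sig) sD [:: (s, a, d)] s' t = J n (sig (a, d, s')) (shiftD (s, a, d) sD) [::] s' t.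
Proof. by rewrite Jfin_cons; apply: Jfin_eq_from => // h s'' t' <-. Qed.

Definition rmax : R :=
  \sum_(x : S * A * D * S * Th) `|Rw x.1.1.1.1 x.1.1.1.2 x.1.1.2 x.1.2 x.2|.

Lemma rmax_ge s a d s' t : `|Rw s a d s' t| <= rmax.
Proof. by rewrite /rmax (bigD1 (s, a, d, s', t)) //= lerDl sumr_ge0. Qed.

Lemma rmax_ge0 : 0 <= rmax.
Proof. by apply: sumr_ge0 => *. Qed.

Definition vmax : R := rmax / (1 - gamma).

Lemma vmax_fix : rmax + gamma * vmax = vmax.
Proof. have g1' : 1 - gamma != 0 by rewrite subr_eq0 gt_eqF. by rewrite /vmax; field. Qed.

Lemma vmax_ge0 : 0 <= vmax.
Proof. by rewrite divr_ge0 ?rmax_ge0 // subr_ge0 ltW. Qed.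

Lemma discountB (r x y : R) : (r + gamma * x) - (r + gamma * y) = gamma * (x - y).
Proof. by ring. Qed.

Lemma norm_Jfin_le n sA sD h s t : behavA sA -> behavD sD -> `|J n sA sD h s t| <= vmax.
Proof.
move=> HA HD; elim: n h s => [|n IH] h s /=; first by rewrite normr0 vmax_ge0.
rewrite -vmax_fix; apply: norm_avg3_le => // a d s'.
apply: le_trans (ler_normD _ _) _; rewrite lerD ?rmax_ge //.
by rewrite normrM ger0_norm // ler_wpM2l.
Qed.

Lemma Jfin_tail_le n k sA sD h s t : behavA sA -> behavD sD ->
  `|J (n + k) sA sD h s t - J n sA sD h s t| <= gamma ^+ n * (2 * vmax).
Proof.
move=> HA HD; elim: n h s => [|n IH] h s.
  rewrite /= subr0 expr0 mul1r; apply: le_trans (norm_Jfin_le k h s t HA HD) _.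
  by rewrite ler_peMl ?vmax_ge0 // ler1n.
rewrite addSn /= sum3B.
under eq_bigr do under eq_bigr do under eq_bigr do rewrite -mulrBr discountB.
apply: norm_avg3_le => // a d s'.
by rewrite normrM ger0_norm // exprS -mulrA ler_wpM2l.
Qed.

Definition payoff_fin n sA sD (s : S) (b : Th -> R) : R := \sum_t b t * J n sA sD [::] s t.

Lemma payoff_fin_bounded n s b : isdist b ->
  bounded_on behavA behavD (fun sA sD => payoff_fin n sA sD s b) vmax.
Proof. by move=> Hb sA sD HA HD; apply: norm_avg_le => // t; apply: norm_Jfin_le. Qed.

Lemma payoff_approx n sA sD s b : isdist b -> behavA sA -> behavD sD ->
  `|payoff sA sD s b - payoff_fin n sA sD s b| <= gamma ^+ n * (2 * vmax).
Proof.
move=> Hb HA HD; apply: (geometric_cauchy_lim g0 g1) => m k.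
rewrite /payoff_fin -sumrB; under eq_bigr do rewrite -mulrBr.
by apply: norm_avg_le => // t; apply: Jfin_tail_le.
Qed.

Lemma payoff_bounded s b : isdist b ->
  bounded_on behavA behavD (fun sA sD => payoff sA sD s b) (2 * vmax).
Proof.
move=> Hb sA sD HA HD; have := payoff_approx 0 s Hb HA HD.
by rewrite /payoff_fin big1 ?subr0 ?expr0 ?mul1r // => t _; rewrite mulr0.
Qed.

Definition Vfin n (s : S) (b : Th -> R) : R :=
  supinf behavA behavD (fun sA sD => payoff_fin n sA sD s b).

Lemma Vfin_bounded n : bounded_by (Vfin n) vmax.
Proof. by move=> s b Hb; apply: supinf_norm_le (payoff_fin_bounded n s Hb); exact: vmax_ge0. Qed.

Lemma Vgame_approx n s b : isdist b -> `|Vgame s b - Vfin n s b| <= gamma ^+ n * (2 * vmax).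
Proof.
move=> Hb; apply: (@supinf_norm_sub_le _ _ _ _ _ _ _ (2 * vmax)).
- by rewrite mulr_ge0 ?exprn_ge0 // mulr_ge0 ?vmax_ge0.
- exact: payoff_bounded.
- by move=> sA sD HA HD; apply: payoff_approx.
Qed.

Section Bellman.
Variables (pAs : Th -> A -> R) (q : D -> R) (s : S) (b : Th -> R).
Hypotheses (Hb : isdist b) (HpA : forall t, isdist (pAs t)) (Hq : isdist q).

Definition bellman (X : A -> D -> S -> Th -> R) : R :=
  \sum_a \sum_d \sum_s' amarg pAs b a * q d * Tr s a d s' *
    \sum_t tau pAs b a t * (Rw s a d s' t + gamma * X a d s' t).

Lemma bellmanB X Y : bellman X - bellman Y =
  \sum_a \sum_d \sum_s' amarg pAs b a * q d * Tr s a d s' *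
    (gamma * (\sum_t tau pAs b a t * X a d s' t - \sum_t tau pAs b a t * Y a d s' t)).
Proof.
rewrite sum3B; apply: eq_bigr => a _; apply: eq_bigr => d _; apply: eq_bigr => s' _.
rewrite -mulrBr -!sumrB; congr (_ * _); rewrite mulr_sumr; apply: eq_bigr => t _.
by rewrite -!mulrBr discountB mulrCA.
Qed.

Lemma bellman_le X Y e : 0 <= e ->
  (forall a d s', \sum_t tau pAs b a t * X a d s' t <= \sum_t tau pAs b a t * Y a d s' t + e) ->
  bellman X <= bellman Y + e.
Proof.
move=> e0 HXY; rewrite -lerBlDl bellmanB.
apply: avg3_le => [||a d|a d s']; [exact: amarg_dist | exact: Hq | exact: HTr |].
apply: le_trans (_ : gamma * e <= e); last by rewrite ler_piMl // ltW.
by rewrite ler_wpM2l // lerBlDl.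
Qed.

Lemma norm_bellmanB_le X Y e :
  (forall a d s', `|\sum_t tau pAs b a t * X a d s' t - \sum_t tau pAs b a t * Y a d s' t| <= e) ->
  `|bellman X - bellman Y| <= gamma * e.
Proof.
move=> HXY; rewrite bellmanB.
apply: norm_avg3_le => [||a d|a d s']; [exact: amarg_dist | exact: Hq | exact: HTr |].
by rewrite normrM ger0_norm // ler_wpM2l.
Qed.

Lemma norm_bellman_le X K : (forall a d s' t, `|X a d s' t| <= K) ->
  `|bellman X| <= rmax + gamma * K.
Proof.
move=> HX; apply: norm_avg3_le => [||a d|a d s']; [exact: amarg_dist | exact: Hq | exact: HTr |].
apply: norm_avg_le => [|t]; first exact: tau_dist.
apply: le_trans (ler_normD _ _) _; rewrite lerD ?rmax_ge //.
by rewrite normrM ger0_norm // ler_wpM2l.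
Qed.

End Bellman.

Lemma stageE v s b pA pD : isdist b -> stratA pA ->
  stage v s b pA pD = bellman (pA s) (pD s) s b (fun a _ s' _ => v s' (tau (pA s) b a)).
Proof.
move=> Hb HA; apply: eq_bigr => a _; apply: eq_bigr => d _; apply: eq_bigr => s' _.
by rewrite mulr_sumr; apply: eq_bigr => t _; rewrite (bayes Hb (HA s)); ring.
Qed.

Lemma payoff_fin_succE n sA sD s b : isdist b -> behavA sA ->
  payoff_fin n.+1 sA sD s b = bellman (fun t => sA t [::] s) (sD [::] s) s b
    (fun a d s' t => J n sA sD [:: (s, a, d)] s' t).
Proof.
move=> Hb HA; rewrite /payoff_fin /=.
under eq_bigr do rewrite mulr_sumr; rewrite exchange_big; apply: eq_bigr => a _.
under eq_bigr do rewrite mulr_sumr; rewrite exchange_big; apply: eq_bigr => d _.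
under eq_bigr do rewrite mulr_sumr; rewrite exchange_big; apply: eq_bigr => s' _.
have HA0 t : isdist (sA t [::] s) by apply: HA.
by rewrite mulr_sumr; apply: eq_bigr => t _; rewrite !mulrA (bayes Hb HA0); ring.
Qed.

Lemma norm_stage_le v K s b pA pD : bounded_by v K -> isdist b -> stratA pA -> stratD pD ->
  `|stage v s b pA pD| <= rmax + gamma * K.
Proof.
move=> Hv Hb HA HD; rewrite stageE //.
by apply: (norm_bellman_le s Hb (HA s) (HD s)) => a d s' t; apply/Hv/tau_dist.
Qed.

Lemma G_bounded_by v K : bounded_by v K -> bounded_by (G v) (rmax + gamma * K).
Proof.
move=> Hv s b Hb; have K0 : 0 <= K := le_trans (normr_ge0 _) (Hv s b Hb).
apply: supinf_norm_le => [|pA pD HA HD]; first by rewrite addr_ge0 ?rmax_ge0 ?mulr_ge0.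
exact: norm_stage_le.
Qed.

Lemma G_lipschitz v w Kv Kw s b : bounded_by v Kv -> bounded_by w Kw -> isdist b ->
  `|G v s b - G w s b| <= gamma * supdist v w.
Proof.
move=> Hv Hw Hb; apply: (@supinf_norm_sub_le _ _ _ _ _ _ _ (rmax + gamma * Kv)).
- by rewrite mulr_ge0 // (supdist_ge0 Hv Hw).
- by move=> pA pD HA HD; apply: norm_stage_le.
move=> pA pD HA HD; rewrite !stageE //; apply: (norm_bellmanB_le s Hb (HA s) (HD s)) => a d s'.
have Htau := tau_dist Hb (HA s) a.
by rewrite !avg_const //; apply: norm_sub_le_supdist Hv Hw Htau.
Qed.

Section BellmanEquation.
Variables (n : nat) (s : S) (b : Th -> R) (e : R).
Hypotheses (Hb : isdist b) (e0 : 0 < e).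
Hypotheses (exA : exists pA, stratA pA) (exD : exists pD, stratD pD).

Let stage_Vfin_bounded : bounded_on stratA stratD (stage (Vfin n) s b) vmax.
Proof. by move=> pA pD HA HD; rewrite -vmax_fix; apply: norm_stage_le (Vfin_bounded n) _ _ _. Qed.

(* The defender follows pD at the first stage, then an epsilon-best response to
   each continuation of sA at the corresponding posterior belief. *)
Lemma Vfin_succ_le : Vfin n.+1 s b <= G (Vfin n) s b + e.
Proof.
case: exA exD => pA0 HA0 [pD0 HD0].
apply: (supinf_le (payoff_fin_bounded n.+1 s Hb) stage_Vfin_bounded).
- by exists (fun t _ s => pA0 s t) => t h s'; apply: HA0.
- by exists pD0.
move=> sA HA; set pAs := fun s t => sA t [::] s.
have HpA : stratA pAs by move=> s' t; apply: HA.
exists pAs => // pD HD.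
have Hrho (x : A * D * S) : exists rho, behavD rho /\
    payoff_fin n (shiftA (s, x.1.1, x.1.2) sA) rho x.2 (tau (pAs s) b x.1.1)
      <= Vfin n x.2 (tau (pAs s) b x.1.1) + e.
  case: x => [[a d] s'] /=.
  have Htau := tau_dist Hb (HpA s) a.
  have HAs : behavA (shiftA (s, a, d) sA) by move=> t h s''; apply: HA.
  have exD' : exists sD, behavD sD by exists (fun _ => pD) => h; apply: HD.
  have [rho ? ?] := supinf_inner_approx (payoff_fin_bounded n s' Htau) HAs exD' e0.
  by exists rho.
have [rho Hrho'] := choice Hrho.
exists (glue pD rho).
  by apply: glue_forall => [s'|x]; [apply: HD | case: (Hrho' x)].
rewrite payoff_fin_succE // stageE //.
apply: (bellman_le s Hb (HpA s) (HD s) (ltW e0)) => a d s'.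
rewrite avg_const; last exact: tau_dist.
under eq_bigr do rewrite Jfin_glueD.
exact: (proj2 (Hrho' (a, d, s'))).
Qed.

(* The attacker follows pA at the first stage, then an epsilon-optimal
   continuation at each posterior belief. *)
Lemma G_Vfin_le : G (Vfin n) s b <= Vfin n.+1 s b + e.
Proof.
case: exA exD => pA0 HA0 [pD0 HD0].
apply: (supinf_le stage_Vfin_bounded (payoff_fin_bounded n.+1 s Hb)).
- by exists pA0.
- by exists (fun _ => pD0) => h; apply: HD0.
move=> pA HA.
have Hsig (x : A * D * S) : exists sig, behavA sig /\
    forall sD, behavD sD -> Vfin n x.2 (tau (pA s) b x.1.1)
      <= payoff_fin n sig sD x.2 (tau (pA s) b x.1.1) + e.
  case: x => [[a d] s'] /=.
  have Htau := tau_dist Hb (HA s) a.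
  have exA' : exists sA, behavA sA by exists (fun t _ s => pA0 s t) => t h s''; apply: HA0.
  have [sig ? ?] := supinf_outer_approx (payoff_fin_bounded n s' Htau) exA' e0.
  by exists sig.
have [sig Hsig'] := choice Hsig.
have HsigA : behavA (glueA pA sig).
  by move=> t; apply: glue_forall => [s'|x h s']; [apply: HA | case: (Hsig' x) => + _; apply].
exists (glueA pA sig) => // sD HD; exists (sD [::]); first by move=> s'; apply: HD.
rewrite stageE // payoff_fin_succE //.
apply: (bellman_le s Hb (HA s) (HD [::] s) (ltW e0)) => a d s'.
rewrite avg_const; last exact: tau_dist.
under [X in _ <= X + _]eq_bigr do rewrite Jfin_glueA.
by apply: (proj2 (Hsig' (a, d, s'))) => h s''; apply: HD.
Qed.

End BellmanEquation.

Lemma GE v s b : G v s b = supinf stratA stratD (stage v s b).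
Proof. by []. Qed.

Lemma Vfin_succ n s b : isdist b -> Vfin n.+1 s b = G (Vfin n) s b.
Proof.
move=> Hb; have [exA|nA] := pselect (exists pA, stratA pA); last first.
  rewrite GE /Vfin (supinf_set0 _ (or_introl nA)) supinf_set0 //; left=> -[sA HA].
  by apply: nA; exists (fun s t => sA t [::] s) => s' t; apply: HA.
have [exD|nD] := pselect (exists pD, stratD pD); last first.
  rewrite GE /Vfin (supinf_set0 _ (or_intror nD)) supinf_set0 //; right=> -[sD HD].
  by apply: nD; exists (sD [::]) => s'; apply: HD.
apply/le_anti/andP; split; apply/ler_addgt0Pr => e e0; [exact: Vfin_succ_le | exact: G_Vfin_le].
Qed.

Lemma Vgame_bounded : bounded_by Vgame (2 * vmax).
Proof.
move=> s b Hb; apply: supinf_norm_le => [|sA sD HA HD]; last exact: payoff_bounded.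
by rewrite mulr_ge0 ?vmax_ge0.
Qed.

Lemma G_Vgame s b : isdist b -> G Vgame s b = Vgame s b.
Proof.
move=> Hb; apply/eqP; rewrite -subr_eq0; apply/eqP.
apply: (@geometric_bound_eq0 _ gamma g0 g1 _ (4 * vmax)) => n.
have c0 : 0 <= gamma ^+ n * (2 * vmax).
  by rewrite mulr_ge0 ?exprn_ge0 // mulr_ge0 ?vmax_ge0.
have le_G : `|G Vgame s b - G (Vfin n) s b| <= gamma ^+ n * (2 * vmax).
  apply: le_trans (G_lipschitz s Vgame_bounded (Vfin_bounded n) Hb) _.
  apply: le_trans (ler_wpM2l g0 (supdist_le c0 (fun s b Hb => Vgame_approx n s Hb))) _.
  by rewrite ler_piMl // ltW.
have le_V : `|Vfin n.+1 s b - Vgame s b| <= gamma ^+ n * (2 * vmax).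
  rewrite distrC; apply: le_trans (Vgame_approx n.+1 s Hb) _.
  by rewrite exprS -mulrA ler_piMl // ltW.
have -> : G Vgame s b - Vgame s b =
    (G Vgame s b - G (Vfin n) s b) + (Vfin n.+1 s b - Vgame s b).
  by rewrite Vfin_succ // addrA subrK.
have -> : gamma ^+ n * (4 * vmax) = gamma ^+ n * (2 * vmax) + gamma ^+ n * (2 * vmax) by ring.
by apply: le_trans (ler_normD _ _) _; apply: lerD.
Qed.

Lemma G_contraction v w : bounded v -> bounded w -> supdist (G v) (G w) <= gamma * supdist v w.
Proof.
move=> [Kv Hv] [Kw Hw]; apply: supdist_le => [|s b Hb]; last exact: G_lipschitz Hv Hw Hb.
by rewrite mulr_ge0 // (supdist_ge0 Hv Hw).
Qed.

Lemma iter_G_bounded v0 K n : bounded_by v0 K -> exists Kn, bounded_by (iter n G v0) Kn.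
Proof.
move=> Hv0; elim: n => [|n [Kn HKn]]; first by exists K.
by exists (rmax + gamma * Kn); apply: G_bounded_by.
Qed.

Lemma iter_G_approx v0 K n s b : bounded_by v0 K -> isdist b ->
  `|iter n G v0 s b - Vgame s b| <= gamma ^+ n * (K + 2 * vmax).
Proof.
move=> Hv0 Hb; have K0 : 0 <= K := le_trans (normr_ge0 _) (Hv0 s b Hb).
have c0 m : 0 <= gamma ^+ m * (K + 2 * vmax).
  by rewrite mulr_ge0 ?exprn_ge0 // addr_ge0 // mulr_ge0 ?vmax_ge0.
elim: n s b Hb => [|n IH] s b Hb.
  rewrite expr0 mul1r; apply: le_trans (ler_normB _ _) _.
  by rewrite lerD ?Hv0 ?Vgame_bounded.
have [Kn HKn] := iter_G_bounded n Hv0.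
rewrite /= -G_Vgame //; apply: le_trans (G_lipschitz s HKn Vgame_bounded Hb) _.
by rewrite exprS -mulrA ler_wpM2l // supdist_le.
Qed.

Lemma iter_G_cvg v0 : bounded v0 -> forall e, 0 < e ->
  exists N, forall n, (N <= n)%N -> forall s b, isdist b -> `|iter n G v0 s b - Vgame s b| <= e.
Proof.
move=> [K Hv0] e e0; have Hv0' : bounded_by v0 `|K|.
  by move=> s b Hb; apply: le_trans (Hv0 s b Hb) (ler_norm K).
have c0 : 0 <= `|K| + 2 * vmax by rewrite addr_ge0 // mulr_ge0 ?vmax_ge0.
have [N HN] := geometric_eventually_le g0 g1 c0 e0.
by exists N => n le_Nn s b Hb; apply: le_trans (iter_G_approx n s Hv0' Hb) (HN n le_Nn).
Qed.

End Game.

Theorem lemma2 (R : realType) (S A D Th : finType)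
  (Tr : S -> A -> D -> S -> R) (Rw : S -> A -> D -> S -> Th -> R) (gamma : R) :
  (forall s a d, isdist (Tr s a d)) -> 0 <= gamma -> gamma < 1 ->
  [/\ (forall v, bounded v -> bounded (G Tr Rw gamma v)),
      (forall v w, bounded v -> bounded w ->
         supdist (G Tr Rw gamma v) (G Tr Rw gamma w) <= gamma * supdist v w),
      (forall v0, bounded v0 -> forall e : R, 0 < e ->
         exists N : nat, forall n : nat, (N <= n)%N -> forall s b, isdist b ->
           `|iter n (G Tr Rw gamma) v0 s b - Vgame Tr Rw gamma s b| <= e)
    & bounded (Vgame Tr Rw gamma) /\
      (forall s b, isdist b -> G Tr Rw gamma (Vgame Tr Rw gamma) s b = Vgame Tr Rw gamma s b)].
Proof.
move=> HTr g0 g1; split.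
- by move=> v [K HK]; exists (rmax Rw + gamma * K); apply: G_bounded_by.
- exact: G_contraction.
- exact: iter_G_cvg.
- by split; [exists (2 * vmax Rw gamma); apply: Vgame_bounded | apply: G_Vgame].
Qed.
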